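(* Let $p$ be a lattice norm on $\mathbb{R}^2$ with $p((1,0))=1$ which is strictly increasing on the half-line $\{(1,u):u\in[0,\infty)\}$ (i.e. $0\le u<u'$ implies $p((1,u))<p((1,u'))$), and let $\Phi$ be a strictly convex Orlicz function. Assume that for every $x\in L^\Phi(\mu)\setminus\{0\}$ there exists $l\in(0,\infty)$ with $\|x\|_{\Phi,p}=\frac1l p((1,I_\Phi(lx)))$. Then $(L^\Phi(\mu),\|\cdot\|_{\Phi,p})$ is strictly convex.
   Context: $(\Omega,\Sigma,\mu)$ is a $\sigma$-finite complete measure space, $L^0$ the space of (classes of a.e. equal) real measurable functions. An Orlicz function is a function $\Phi:\mathbb{R}\to[0,\infty)$ which is convex, even, vanishes at $0$ and is not identically zero. $I_\Phi(x)=\int_\Omega\Phi(x(t))\,d\mu\in[0,+\infty]$; $L^\Phi(\mu)=\{x\in L^0: I_\Phi(\lambda x)<\infty\text{ for some }\lambda>0\}$. A lattice norm on $\mathbb{R}^2$ is a norm $p$ with $p((u,v))\le p((u',v'))$ whenever $|u|\le|u'|,|v|\le|v'|$; $\|x\|_{\Phi,p}=\inf_{k>0}\frac1k p((1,I_\Phi(kx)))$ with the convention $p((1,+\infty))=+\infty$. A normed space is strictly convex if $\|x\|=\|y\|=1$, $x\ne y$ imply $\|(x+y)/2\|<1$. *)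

From HB Require Import structures.
From mathcomp Require Import all_boot all_order all_algebra.
From mathcomp Require Import all_classical all_reals all_analysis.
Set Implicit Arguments. Unset Strict Implicit. Unset Printing Implicit Defensive.
Import Order.TTheory GRing.Theory Num.Theory.
Local Open Scope classical_set_scope.
Local Open Scope ring_scope.

Definition orlicz_function (R : realType) (Phi : R -> R) : Prop :=
  [/\ (forall s, 0 <= Phi s),
      (forall a b (t : R), 0 <= t <= 1 -> Phi (t * a + (1 - t) * b) <= t * Phi a + (1 - t) * Phi b),
      (forall s, Phi (- s) = Phi s),
      Phi 0 = 0 &
      exists s, Phi s != 0].

Definition strictly_convex_fun (R : realType) (Phi : R -> R) : Prop :=
  forall a b (t : R), a != b -> 0 < t < 1 ->
    Phi (t * a + (1 - t) * b) < t * Phi a + (1 - t) * Phi b.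

Definition lattice_norm (R : realType) (p : R * R -> R) : Prop :=
  [/\ (forall z, p z = 0 -> z = (0, 0)),
      (forall (a : R) z, p (a * z.1, a * z.2) = `|a| * p z),
      (forall z w, p (z.1 + w.1, z.2 + w.2) <= p z + p w) &
      (forall u v u' v', `|u| <= `|u'| -> `|v| <= `|v'| -> p (u, v) <= p (u', v'))].

(* p((1,u)) extended with the convention p((1,+oo)) = +oo *)
Definition p1E (R : realType) (p : R * R -> R) (u : \bar R) : \bar R :=
  match u with
  | r%:E => (p (1, r))%:E
  | _ => +oo%E
  end.

Definition I_Phi d (T : measurableType d) (R : realType)
  (mu : {measure set T -> \bar R}) (Phi : R -> R) (x : T -> R) : \bar R :=
  (\int[mu]_t (Phi (x t))%:E)%E.

Definition in_LPhi d (T : measurableType d) (R : realType)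
  (mu : {measure set T -> \bar R}) (Phi : R -> R) (x : T -> R) : Prop :=
  measurable_fun setT x /\
  exists lam : R, 0 < lam /\ (I_Phi mu Phi (fun t => (lam * x t)%R) < +oo)%E.

Definition norm_Phi_p d (T : measurableType d) (R : realType)
  (mu : {measure set T -> \bar R}) (Phi : R -> R) (p : R * R -> R) (x : T -> R) : \bar R :=
  ereal_inf [set ((k^-1)%:E * p1E p (I_Phi mu Phi (fun t => (k * x t)%R)))%E | k in [set k : R | 0 < k]].

From HB Require Import structures.
From mathcomp Require Import all_boot all_order all_algebra.
From mathcomp Require Import all_classical all_reals all_analysis.
From mathcomp Require Import measurable_realfun ring lra.
Set Implicit Arguments. Unset Strict Implicit. Unset Printing Implicit Defensive.
Import Order.TTheory GRing.Theory Num.Theory.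
Local Open Scope classical_set_scope.
Local Open Scope ring_scope.

(* Let ||x|| = ||y|| = 1 with the infima attained at k and l, so that
   p((1, I_Phi(kx))) = k and p((1, I_Phi(ly))) = l.  With a = l/(k+l) and
   M = 2kl/(k+l) one has M(x+y)/2 = a(kx) + (1-a)(ly).  Unless kx = ly a.e.
   (which forces k = l and x = y a.e.), strict convexity of Phi gives
   I_Phi(M(x+y)/2) < a I_Phi(kx) + (1-a) I_Phi(ly); p((1,.)) is strictly
   increasing and convex, so p((1, I_Phi(M(x+y)/2))) < ak + (1-a)l = M, i.e.
   ||(x+y)/2|| <= M^-1 p((1, I_Phi(M(x+y)/2))) < 1. *)

Lemma measurable_funZ d (T : measurableType d) (R : realType) (k : R) (f : T -> R) :
  measurable_fun setT f -> measurable_fun setT (fun t => k * f t).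
Proof. by move=> mf; apply: (@measurable_funM _ _ _ _ (cst k) f). Qed.

Definition convex_gap (R : realType) (Phi : R -> R) (a u v : R) : R :=
  a * Phi u + (1 - a) * Phi v - Phi (a * u + (1 - a) * v).

Section OrliczFunction.
Variables (R : realType) (Phi : R -> R).
Hypothesis HPhi : orlicz_function Phi.

Lemma orlicz_ge0 s : 0 <= Phi s.
Proof. by case: HPhi. Qed.

Lemma orlicz_le_ge0 s s' : 0 <= s -> s <= s' -> Phi s <= Phi s'.
Proof.
case: HPhi => _ Pconv _ P0 _ s_ge0 ss'.
have [s'0|s'_neq0] := eqVneq s' 0.
  by have -> : s = s' by apply/le_anti; rewrite ss' s'0 s_ge0.
have s'_gt0 : 0 < s' by rewrite lt_neqAle eq_sym s'_neq0 (le_trans s_ge0 ss').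
have := Pconv s' 0 (s / s').
rewrite mulr0 addr0 divfK ?gt_eqF // P0 mulr0 addr0 => /(_ _)/le_trans; apply.
  by rewrite divr_ge0 ?(ltW s'_gt0) //= ler_pdivrMr // mul1r.
by rewrite -[leRHS]mul1r ler_wpM2r ?orlicz_ge0 // ler_pdivrMr // mul1r.
Qed.

Lemma orlicz_normr s : Phi `|s| = Phi s.
Proof. by case: HPhi => _ _ Peven _ _; case: (ler0P s). Qed.

(* Phi is nondecreasing on [0, oo), so Phi = h \o normr with h nondecreasing. *)
Lemma measurable_orlicz d (T : measurableType d) (f : T -> R) :
  measurable_fun setT f -> measurable_fun setT (fun t => Phi (f t)).
Proof.
move=> mf.
pose h s := Phi (Num.max s 0).
have h_nd : nondecreasing_fun h.
  move=> a b ab; apply: orlicz_le_ge0; first by rewrite le_max lexx orbT.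
  by rewrite ge_max !le_max ab lexx /= orbT.
have mh : measurable_fun setT h by exact: nondecreasing_measurable.
have -> : (fun t => Phi (f t)) = h \o (Num.norm \o f).
  by apply/funext => t /=; rewrite /h max_l // orlicz_normr.
by apply: measurableT_comp => //; apply: measurableT_comp.
Qed.

Lemma measurable_orlicz_EFin d (T : measurableType d) (f : T -> R) :
  measurable_fun setT f -> measurable_fun setT (fun t => (Phi (f t))%:E).
Proof. by move=> mf; apply/measurable_EFinP; exact: measurable_orlicz. Qed.

Lemma convex_gap_ge0 (a u v : R) : 0 <= a <= 1 -> 0 <= convex_gap Phi a u v.
Proof. by move=> a01; rewrite subr_ge0; case: HPhi => _ Pconv _ _ _; exact: Pconv. Qed.

Lemma convex_gap_eq0 (a u v : R) : strictly_convex_fun Phi -> 0 < a < 1 ->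
  convex_gap Phi a u v = 0 -> u = v.
Proof.
move=> Phi_strict a01 /eqP; apply: contraTeq => uv.
by rewrite subr_eq0 gt_eqF // Phi_strict.
Qed.

Lemma measurable_convex_gap d (T : measurableType d) (a : R) (f g : T -> R) :
  measurable_fun setT f -> measurable_fun setT g ->
  measurable_fun setT (fun t => convex_gap Phi a (f t) (g t)).
Proof.
move=> mf mg; apply: measurable_funB.
  by apply: measurable_funD; apply: measurable_funZ; exact: measurable_orlicz.
by apply: measurable_orlicz => //; apply: measurable_funD; exact: measurable_funZ.
Qed.

End OrliczFunction.

Lemma integral_gt0_nae0 d (T : measurableType d) (R : realType)
    (mu : {measure set T -> \bar R}) (h : T -> R) :
  measurable_fun setT h -> (forall t, 0 <= h t) ->
  ~ {ae mu, forall t, h t = 0} -> (0 < \int[mu]_t (h t)%:E)%E.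
Proof.
move=> mh h_ge0 h_nae0.
rewrite lt0e integral_ge0 ?andbT; last by move=> t _; rewrite lee_fin.
apply/eqP => int_h0; apply: h_nae0.
have : \forall t \ae mu, [set: T] t -> (h t)%:E = 0%E.
  apply/(ae_eq_integral_abs mu measurableT); first exact/measurable_EFinP.
  by rewrite -int_h0; apply: eq_integral => t _; rewrite gee0_abs // lee_fin.
by apply: filterS => t /(_ I) [].
Qed.

Section Modular.
Variables (d : measure_display) (T : measurableType d) (R : realType).
Variables (mu : {measure set T -> \bar R}) (Phi : R -> R).
Hypothesis HPhi : orlicz_function Phi.

Lemma I_Phi_ge0 (f : T -> R) : (0 <= I_Phi mu Phi f)%E.
Proof. by apply: integral_ge0 => t _; rewrite lee_fin orlicz_ge0. Qed.

Lemma I_Phi_ae_eq (f g : T -> R) :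
  measurable_fun setT f -> measurable_fun setT g ->
  {ae mu, forall t, f t = g t} -> I_Phi mu Phi f = I_Phi mu Phi g.
Proof.
move=> mf mg fg; apply: ae_eq_integral => //; try exact: measurable_orlicz_EFin.
by apply: filterS fg => t /= -> _.
Qed.

Lemma I_Phi_ae0 (f : T -> R) :
  measurable_fun setT f -> {ae mu, forall t, f t = 0} -> I_Phi mu Phi f = 0%E.
Proof.
move=> mf f0; rewrite (@I_Phi_ae_eq _ (cst 0)) //.
by rewrite /I_Phi /=; case: HPhi => _ _ _ -> _; exact: integral0.
Qed.

Lemma I_Phi_convex_gap (f g : T -> R) (a : R) :
  measurable_fun setT f -> measurable_fun setT g -> 0 <= a <= 1 ->
  (I_Phi mu Phi (fun t => (a * f t + (1 - a) * g t)%R) +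
   \int[mu]_t (convex_gap Phi a (f t) (g t))%:E =
     a%:E * I_Phi mu Phi f + (1 - a)%:E * I_Phi mu Phi g)%E.
Proof.
move=> mf mg a01; have /andP[a_ge0 a_le1] := a01.
have a'_ge0 : 0 <= 1 - a by rewrite subr_ge0.
rewrite /I_Phi -ge0_integralD //; first last.
- exact/measurable_EFinP/measurable_convex_gap.
- by move=> t _; rewrite lee_fin convex_gap_ge0.
- apply: measurable_orlicz_EFin => //; apply: measurable_funD; exact: measurable_funZ.
- by move=> t _; rewrite lee_fin orlicz_ge0.
rewrite -!ge0_integralZl_EFin //; try by move=> t _; rewrite lee_fin orlicz_ge0.
  2,3: exact: measurable_orlicz_EFin.
rewrite -ge0_integralD //.
- by apply: eq_integral => t _; rewrite -!EFinM -!EFinD /convex_gap addrC subrK.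
- by move=> t _; rewrite -EFinM lee_fin mulr_ge0 // orlicz_ge0.
- by apply/measurable_EFinP; apply: measurable_funZ; exact: measurable_orlicz.
- by move=> t _; rewrite -EFinM lee_fin mulr_ge0 // orlicz_ge0.
- by apply/measurable_EFinP; apply: measurable_funZ; exact: measurable_orlicz.
Qed.

Hypothesis Phi_strict : strictly_convex_fun Phi.

Lemma I_Phi_convex_lt (f g : T -> R) (a rf rg : R) :
  measurable_fun setT f -> measurable_fun setT g -> 0 < a < 1 ->
  ~ {ae mu, forall t, f t = g t} ->
  I_Phi mu Phi f = rf%:E -> I_Phi mu Phi g = rg%:E ->
  exists2 r, I_Phi mu Phi (fun t => a * f t + (1 - a) * g t) = r%:E
           & r < a * rf + (1 - a) * rg.
Proof.
move=> mf mg a_in fg_nae If Ig.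
have a01 : 0 <= a <= 1 by case/andP: a_in => *; rewrite !ltW.
have := I_Phi_convex_gap mf mg a01; rewrite If Ig -!EFinM -EFinD.
have gap_gt0 : (0 < \int[mu]_t (convex_gap Phi a (f t) (g t))%:E)%E.
  apply: integral_gt0_nae0 => [|t|gap_ae0]; first exact: measurable_convex_gap.
    exact: convex_gap_ge0.
  by apply: fg_nae; apply: filterS gap_ae0 => t; exact: convex_gap_eq0.
have := I_Phi_ge0 (fun t => a * f t + (1 - a) * g t); rewrite /I_Phi.
case: (\int[mu]_t _)%E (\int[mu]_t _)%E gap_gt0 => [r| |] [s| |] //=.
by move=> s_gt0 _ [<-]; exists r; rewrite // ltrDl -lte_fin.
Qed.

End Modular.

Section LatticeNorm.
Variables (R : realType) (p : R * R -> R).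
Hypothesis Hp : lattice_norm p.

Lemma lattice_norm_convex1 (a u v : R) : 0 <= a <= 1 ->
  p (1, a * u + (1 - a) * v) <= a * p (1, u) + (1 - a) * p (1, v).
Proof.
case: Hp => _ Hhom Htri _ /andP[a_ge0 a_le1].
have := Htri (a, a * u) (1 - a, (1 - a) * v); rewrite /= subrKC.
have := Hhom a (1, u); have := Hhom (1 - a) (1, v).
by rewrite /= !mulr1 !ger0_norm ?subr_ge0 // => -> ->.
Qed.

Lemma p1E_divr_eq1 (l : R) (I : \bar R) : 0 < l ->
  ((l^-1)%:E * p1E p I)%E = 1%E -> exists2 r, I = r%:E & p (1, r) = l.
Proof.
move=> l_gt0; case: I => [r| |] /=; last 2 first.
- by rewrite gt0_muley // lte_fin invr_gt0.
- by rewrite gt0_muley // lte_fin invr_gt0.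
move=> /eqP; rewrite -EFinM eqe => /eqP lr; exists r => //.
by rewrite -(mulVKf (lt0r_neq0 l_gt0) (p (1, r))) lr mulr1.
Qed.

End LatticeNorm.

Section NormPhiP.
Variables (d : measure_display) (T : measurableType d) (R : realType).
Variables (mu : {measure set T -> \bar R}) (Phi : R -> R) (p : R * R -> R).

Lemma norm_Phi_p_le (x : T -> R) (k : R) : 0 < k ->
  (norm_Phi_p mu Phi p x <= (k^-1)%:E * p1E p (I_Phi mu Phi (fun t => (k * x t)%R)))%E.
Proof. by move=> k_gt0; apply: ereal_inf_lbound; exists k. Qed.

Hypothesis HPhi : orlicz_function Phi.
Hypothesis p10 : p (1, 0) = 1.

Lemma norm_Phi_p_ae0_le (x : T -> R) (k : R) : 0 < k ->
  measurable_fun setT x -> {ae mu, forall t, x t = 0} ->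
  (norm_Phi_p mu Phi p x <= (k^-1)%:E)%E.
Proof.
move=> k_gt0 mx x0; have := norm_Phi_p_le x k_gt0.
rewrite I_Phi_ae0 //=; first by rewrite p10 mule1.
- exact: measurable_funZ.
- by apply: filterS x0 => t ->; rewrite mulr0.
Qed.

Lemma norm_Phi_p_eq1_nae0 (x : T -> R) :
  measurable_fun setT x -> norm_Phi_p mu Phi p x = 1%E ->
  ~ {ae mu, forall t, x t = 0}.
Proof.
move=> mx x1 x0; have := norm_Phi_p_ae0_le (ltr0Sn R 1) mx x0.
by rewrite x1 lee_fin; lra.
Qed.

Hypothesis Hp : lattice_norm p.
Hypothesis p_incr : forall u u' : R, 0 <= u -> u < u' -> p (1, u) < p (1, u').
Hypothesis Phi_strict : strictly_convex_fun Phi.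

Lemma norm_Phi_p_midpoint_lt (x y : T -> R) (k l rx ry : R) :
  measurable_fun setT x -> measurable_fun setT y -> 0 < k -> 0 < l ->
  I_Phi mu Phi (fun t => k * x t) = rx%:E -> p (1, rx) = k ->
  I_Phi mu Phi (fun t => l * y t) = ry%:E -> p (1, ry) = l ->
  ~ {ae mu, forall t, k * x t = l * y t} ->
  (norm_Phi_p mu Phi p (fun t => ((x t + y t) / 2)%R) < 1)%E.
Proof.
move=> mx my k_gt0 l_gt0 Ix px Iy py kxly.
have kl_neq0 : k + l != 0 by rewrite gt_eqF ?addr_gt0.
pose a := l / (k + l); pose M := 2 * k * l / (k + l).
have a_gt0 : 0 < a by rewrite divr_gt0 ?addr_gt0.
have a_lt1 : a < 1 by rewrite ltr_pdivrMr ?addr_gt0 // mul1r ltrDr.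
have a_in : 0 < a < 1 by rewrite a_gt0.
have M_gt0 : 0 < M by rewrite divr_gt0 ?addr_gt0 // !mulr_gt0.
have IM : I_Phi mu Phi (fun t => M * ((x t + y t) / 2)) =
          I_Phi mu Phi (fun t => a * (k * x t) + (1 - a) * (l * y t)).
  by congr I_Phi; apply/funext => t; rewrite /M /a; field.
have [r Ir r_lt] := I_Phi_convex_lt HPhi Phi_strict (measurable_funZ k mx)
  (measurable_funZ l my) a_in kxly Ix Iy.
have r_ge0 : 0 <= r by rewrite -lee_fin -Ir I_Phi_ge0.
apply: le_lt_trans (norm_Phi_p_le _ M_gt0) _.
rewrite IM Ir /= -EFinM lte_fin mulrC ltr_pdivrMr // mul1r.
apply: lt_le_trans (p_incr r_ge0 r_lt) _.
apply: le_trans (lattice_norm_convex1 Hp _ _ (_ : 0 <= a <= 1)) _; first by rewrite !ltW.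
suff -> : a * p (1, rx) + (1 - a) * p (1, ry) = M by [].
by rewrite px py /a /M; field.
Qed.

End NormPhiP.

Theorem theorem5 (d : measure_display) (T : measurableType d) (R : realType)
  (mu : {measure set T -> \bar R})
  (mu_sfin : sigma_finite setT mu) (mu_complete : measure_is_complete mu)
  (p : R * R -> R) (Phi : R -> R) :
  lattice_norm p -> p (1, 0) = 1 ->
  (forall u u' : R, 0 <= u -> u < u' -> p (1, u) < p (1, u')) ->
  orlicz_function Phi -> strictly_convex_fun Phi ->
  (forall x : T -> R, in_LPhi mu Phi x -> ~ {ae mu, forall t, x t = 0} ->
     exists l : R, 0 < l /\
       norm_Phi_p mu Phi p x = ((l^-1)%:E * p1E p (I_Phi mu Phi (fun t => (l * x t)%R)))%E) ->
  forall x y : T -> R, in_LPhi mu Phi x -> in_LPhi mu Phi y ->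
    norm_Phi_p mu Phi p x = 1%E -> norm_Phi_p mu Phi p y = 1%E ->
    ~ {ae mu, forall t, x t = y t} ->
    (norm_Phi_p mu Phi p (fun t => ((x t + y t) / 2)%R) < 1)%E.
Proof.
move=> Hp p10 p_incr HPhi Phi_strict attained x y Lx Ly x1 y1 xy_nae.
have [mx my] := (Lx.1, Ly.1).
have [k [k_gt0 xk]] := attained x Lx (norm_Phi_p_eq1_nae0 HPhi p10 mx x1).
have [l [l_gt0 yl]] := attained y Ly (norm_Phi_p_eq1_nae0 HPhi p10 my y1).
rewrite x1 in xk; rewrite y1 in yl.
have [rx Ix px] := p1E_divr_eq1 k_gt0 (esym xk).
have [ry Iy py] := p1E_divr_eq1 l_gt0 (esym yl).
apply: (norm_Phi_p_midpoint_lt HPhi Hp p_incr Phi_strict mx my k_gt0 l_gt0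
  Ix px Iy py) => kxly.
have kl : k = l.
  have : rx%:E = ry%:E.
    by rewrite -Ix -Iy (I_Phi_ae_eq HPhi (measurable_funZ k mx) (measurable_funZ l my)).
  by rewrite -px -py => -[->].
apply: xy_nae; apply: filterS kxly => t /=; rewrite kl.
exact: (mulfI (lt0r_neq0 l_gt0)).
Qed.
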